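(* Let $E,F$ be Banach spaces, $a\in E$, $1\le p,q<\infty$, and let $f:E\rightarrow F$ be absolutely $(p;q)$-summing at $a$. Then for every sequence $(x_{j})_{j=1}^{\infty}\in l_{q}^{u}(E)$ one has $(f(a+x_{j})-f(a))_{j=1}^{\infty}\in l_{p}(F)$.
   Context: For a sequence $(x_j)$ in $E$, $\Vert(x_{j})_{j}\Vert_{w,q}:=\sup_{\varphi\in B_{E'}}(\sum_{j}|\varphi(x_{j})|^{q})^{1/q}$; $l_q^w(E)$ is the space of sequences with this quantity finite, and $l_{q}^{u}(E)$ is the subspace of those with $\lim_{m\to\infty}\Vert(x_{j})_{j=m}^{\infty}\Vert_{w,q}=0$ (unconditionally $q$-summable sequences). $l_p(F)$ is the space of sequences $(y_j)$ in $F$ with $\sum_j\Vert y_j\Vert^p<\infty$. An arbitrary mapping $f:E\to F$ is called absolutely $(p;q)$-summing at $a$ if there exist $M_a,\delta_a,r_a>0$ with $\sum_{j=1}^{k}\Vert f(a+x_{j})-f(a)\Vert^{p}\leq M_{a}\Vert(x_{j})_{j=1}^{k}\Vert_{w,q}^{r_{a}}$ for all $k$ and all $x_1,\dots,x_k\in E$ with $\Vert(x_{j})_{j=1}^{k}\Vert_{w,q}<\delta_{a}$. *)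

From HB Require Import structures.
From mathcomp Require Import all_boot all_order all_algebra.
From mathcomp Require Import all_classical all_reals all_analysis.
Set Implicit Arguments. Unset Strict Implicit. Unset Printing Implicit Defensive.
Import Order.TTheory GRing.Theory Num.Theory.
Import numFieldNormedType.Exports.
Local Open Scope classical_set_scope.
Local Open Scope ring_scope.

(* Closed unit ball B_{E'} of the (topological) dual of a real normed space E:
   linear functionals of operator norm <= 1 (such functionals are automatically
   continuous). *)
Definition dual_ball {R : realType} (E : normedModType R) : set (E -> R) :=
  [set phi | (forall x y : E, phi (x + y) = phi x + phi y) /\
             (forall (c : R) (x : E), phi (c *: x) = c * phi x) /\
             (forall x : E, `|phi x| <= `|x|)].

Definition weak_norm_fin {R : realType} (E : normedModType R) (q : R)
    (x : nat -> E) (k : nat) : \bar R :=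
  ereal_sup ((fun phi : E -> R =>
                ((powR (\sum_(j < k) powR `|phi (x j)| q) q^-1)%:E)%E)
             @` @dual_ball R E).

Definition weak_norm_tail {R : realType} (E : normedModType R) (q : R)
    (x : nat -> E) (m : nat) : \bar R :=
  ereal_sup ((fun phi : E -> R =>
                poweR (\sum_(m <= j <oo) ((powR `|phi (x j)| q)%:E))%E q^-1)
             @` @dual_ball R E).

Definition lqu {R : realType} (E : normedModType R) (q : R) : set (nat -> E) :=
  [set x | (weak_norm_tail q x 0 < +oo)%E /\
           weak_norm_tail q x m @[m --> \oo] --> 0%E].

Definition lp {R : realType} (F : normedModType R) (p : R) : set (nat -> F) :=
  [set y | (\sum_(0 <= j <oo) ((powR `|y j| p)%:E) < +oo)%E].

Definition abs_summing_at {R : realType} (E F : normedModType R) (p q : R)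
    (f : E -> F) (a : E) : Prop :=
  exists (M delta r : R), 0 < M /\ 0 < delta /\ 0 < r /\
    forall (k : nat) (x : nat -> E),
      (weak_norm_fin q x k < delta%:E)%E ->
      \sum_(j < k) powR `|f (a + x j) - f a| p
        <= M * powR (fine (weak_norm_fin q x k)) r.

(* Since (x_j) is unconditionally q-summable, some weak tail (x_j)_{j >= m} has weak
   q-norm below the radius delta of the summing inequality at a.  Every finite window
   x_m, ..., x_{m+k-1} then has weak norm below delta, so its contributions
   ||f(a + x_j) - f(a)||^p sum to at most M delta^r, uniformly in k.  Adding the
   finitely many terms with j < m bounds all partial sums of the series. *)

From HB Require Import structures.
From mathcomp Require Import all_boot all_order all_algebra.
From mathcomp Require Import all_classical all_reals all_analysis.
Set Implicit Arguments. Unset Strict Implicit. Unset Printing Implicit Defensive.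
Import Order.TTheory GRing.Theory Num.Theory.
Import numFieldNormedType.Exports.
Local Open Scope classical_set_scope.
Local Open Scope ring_scope.

Section series.
Variable R : realType.

Lemma nneseries_le_of_sums_le (g : nat -> R) (C : R) :
  (forall j, 0 <= g j) -> (forall n, \sum_(j < n) g j <= C) ->
  (\sum_(0 <= j <oo) (g j)%:E <= C%:E)%E.
Proof.
move=> g0 gC.
have g0E n : (0 <= n)%N -> true -> (0 <= (g n)%:E)%E by rewrite lee_fin.
move/ereal_nondecreasing_series/ereal_nondecreasing_cvgn/cvg_lim : g0E => -> //.
apply: ge_ereal_sup => _ [n _ <-] /=.
by rewrite sumEFin lee_fin big_mkord.
Qed.

Lemma sum_le_of_shifted_sums_le (g : nat -> R) (m : nat) (B : R) :
  (forall j, 0 <= g j) -> (forall n, \sum_(j < n) g (j + m)%N <= B) ->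
  forall n, \sum_(j < n) g j <= \sum_(j < m) g j + B.
Proof.
move=> g0 gB n.
have window : \sum_(j < (m + n)%N) g j = \sum_(j < m) g j + \sum_(j < n) g (j + m)%N.
  by rewrite big_split_ord /=; under [X in _ + X = _]eq_bigr do rewrite addnC.
apply: le_trans (_ : \sum_(j < (m + n)%N) g j <= _); last by rewrite window lerD2l.
rewrite -!(big_mkord xpredT) (big_cat_nat (leq0n n) (leq_addl m n)) /= lerDl.
by apply: sumr_ge0 => i _.
Qed.

End series.

Section weak_norm.
Variables (R : realType) (E : normedModType R) (q : R).

Lemma weak_norm_fin_ge0 (x : nat -> E) k : (0 <= weak_norm_fin q x k)%E.
Proof.
apply: le_trans (ereal_sup_ubound _); last first.
  exists (fun _ => 0) => //; split; first by move=> *; rewrite addr0.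
  by split=> [*|y]; rewrite ?mulr0 ?normr0.
by rewrite lee_fin powR_ge0.
Qed.

Lemma weak_norm_fin_shift_le_tail (x : nat -> E) m k : 0 <= q ->
  (weak_norm_fin q (fun j => x (j + m)%N) k <= weak_norm_tail q x m)%E.
Proof.
move=> q0; apply: ge_ereal_sup => _ [phi phi_ball <-].
apply: le_trans (ereal_sup_ubound (ex_intro2 _ _ phi phi_ball erefl)).
rewrite -poweR_EFin; apply: gt0_ler_poweR; first by rewrite invr_ge0.
- rewrite in_itv /= leey andbT -sumEFin.
  by apply: sume_ge0 => i _; rewrite lee_fin powR_ge0.
- rewrite in_itv /= leey andbT.
  by apply: nneseries_ge0 => i _ _; rewrite lee_fin powR_ge0.
rewrite -nneseries_addn => [|i]; last by rewrite lee_fin powR_ge0.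
apply: le_trans (nneseries_lim_ge k _) => [|i _ _]; last by rewrite lee_fin powR_ge0.
by rewrite big_mkord sumEFin.
Qed.

Lemma lqu_weak_tail_lt (x : nat -> E) (delta : R) : 0 < delta ->
  lqu q x -> exists m, (weak_norm_tail q x m < delta%:E)%E.
Proof.
move=> delta0 [_ /fine_cvgP [tail_fin tail_cvg]].
have [N _ tail_small] := filterI tail_fin (@cvgr_lt _ _ _ _ _ _ tail_cvg _ delta0).
exists N; have [/= tailN_fin tailN_lt] := tail_small N (leqnn N).
by rewrite -(fineK tailN_fin) lte_fin.
Qed.

End weak_norm.

Lemma abs_summing_at_uniform_bound (R : realType) (E F : normedModType R)
    (p q : R) (f : E -> F) (a : E) :
  abs_summing_at p q f a ->
  exists2 delta : R, 0 < delta & exists B : R, forall (k : nat) (x : nat -> E),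
    (weak_norm_fin q x k < delta%:E)%E ->
    \sum_(j < k) powR `|f (a + x j) - f a| p <= B.
Proof.
move=> [M [delta [r [M0 [delta0 [r0 summing]]]]]].
exists delta => //; exists (M * powR delta r) => k x small.
apply: le_trans (summing k x small) _; rewrite ler_pM2l //.
move: small (weak_norm_fin_ge0 q x k).
case: (weak_norm_fin q x k) => //= w; rewrite lte_fin lee_fin => /ltW wd w0.
by apply: ge0_ler_powR; rewrite ?nnegrE // ltW.
Qed.

Theorem mainTheorem2 (R : realType) (E F : completeNormedModType R) (a : E)
    (p q : R) (hp : 1 <= p) (hq : 1 <= q) (f : E -> F) :
  abs_summing_at p q f a ->
  forall x : nat -> E, lqu q x ->
    lp p (fun j => f (a + x j) - f a).
Proof.
move=> /abs_summing_at_uniform_bound [delta delta0 [B window_bound]] x x_lqu.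
have [m tail_small] := lqu_weak_tail_lt delta0 x_lqu.
set g := fun j => powR `|f (a + x j) - f a| p.
have g0 j : 0 <= g j by exact: powR_ge0.
have shifted_bound n : \sum_(j < n) g (j + m)%N <= B.
  apply: (window_bound n (fun j => x (j + m)%N)).
  apply: le_lt_trans tail_small.
  by apply: weak_norm_fin_shift_le_tail; apply: le_trans hq.
apply: le_lt_trans (ltry (\sum_(j < m) g j + B)).
exact/nneseries_le_of_sums_le/sum_le_of_shifted_sums_le.
Qed.
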